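(* Let $\vec a\in\mathbb R^4\setminus\{0\}$, let $V(p)=\vec a+\langle\vec a,p\rangle p$ on $\mathbb H^3$, let $q\neq0$, and let $\gamma\colon I\to\mathbb H^3$ be a non-geodesic curve parametrized by arc-length which is a conformal trajectory of $V$ with torsion identically zero. Then $\langle\vec a,\gamma(s)\rangle=0$ for all $s\in I$ and $\vec a$ is space-like, i.e. $\langle\vec a,\vec a\rangle>0$.
   Context: $\mathbb R^4$ carries the Lorentzian metric $\langle\cdot,\cdot\rangle=dx^2+dy^2+dz^2-dt^2$ and $\mathbb H^3=\{p\in\mathbb R^4:\langle p,p\rangle=-1,\ t>0\}$ with the induced metric and Levi-Civita connection $\nabla$. The cross product of $u,v\in T_p\mathbb H^3$ is the unique $u\times v\in T_p\mathbb H^3$ with $\langle u\times v,w\rangle=\det(u,v,w,p)$ for all $w\in T_p\mathbb H^3$. For a fixed real $q\neq0$, a conformal trajectory of $V$ is a regular curve with $\nabla_{\gamma'}\gamma'=q\,V\times\gamma'$. Torsion is defined by the Frenet frame $T=\gamma'$, $\nabla_TT=\kappa N$ ($\kappa>0$), $B=T\times N$, $\nabla_TN=-\kappa T+\tau B$, $\nabla_TB=-\tau N$. *)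

From Stdlib Require Import Reals.
From Coquelicot Require Import Coquelicot.
Open Scope R_scope.

Record vec4 : Type := V4 { vx : R; vy : R; vz : R; vt : R }.

Definition vadd (u v : vec4) : vec4 :=
  V4 (vx u + vx v) (vy u + vy v) (vz u + vz v) (vt u + vt v).
Definition vscal (c : R) (u : vec4) : vec4 :=
  V4 (c * vx u) (c * vy u) (c * vz u) (c * vt u).

Definition lor (u v : vec4) : R :=
  vx u * vx v + vy u * vy v + vz u * vz v - vt u * vt v.

Definition inH3 (p : vec4) : Prop := lor p p = -1 /\ vt p > 0.

Definition det3 (a1 a2 a3 b1 b2 b3 c1 c2 c3 : R) : R :=
  a1 * (b2 * c3 - b3 * c2) - a2 * (b1 * c3 - b3 * c1) + a3 * (b1 * c2 - b2 * c1).

Definition det4 (u v w p : vec4) : R :=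
    vx u * det3 (vy v) (vz v) (vt v) (vy w) (vz w) (vt w) (vy p) (vz p) (vt p)
  - vy u * det3 (vx v) (vz v) (vt v) (vx w) (vz w) (vt w) (vx p) (vz p) (vt p)
  + vz u * det3 (vx v) (vy v) (vt v) (vx w) (vy w) (vt w) (vx p) (vy p) (vt p)
  - vt u * det3 (vx v) (vy v) (vz v) (vx w) (vy w) (vz w) (vx p) (vy p) (vz p).

Definition e1 := V4 1 0 0 0.
Definition e2 := V4 0 1 0 0.
Definition e3 := V4 0 0 1 0.
Definition e4 := V4 0 0 0 1.

(* Cross product in T_p H^3: the vector X with lor X w = det4 u v w p for
   every w in R^4 (in particular for every w in T_p H^3); X is automatically
   tangent since det4 u v p p = 0, hence it is the unique such vector of
   T_p H^3. *)
Definition cross (p u v : vec4) : vec4 :=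
  V4 (det4 u v e1 p) (det4 u v e2 p) (det4 u v e3 p) (- det4 u v e4 p).

Definition dv (f : R -> vec4) (s : R) : vec4 :=
  V4 (Derive (fun r => vx (f r)) s) (Derive (fun r => vy (f r)) s)
     (Derive (fun r => vz (f r)) s) (Derive (fun r => vt (f r)) s).

Definition smooth_at (f : R -> vec4) (s : R) : Prop :=
  forall n : nat,
    ex_derive_n (fun r => vx (f r)) n s /\ ex_derive_n (fun r => vy (f r)) n s /\
    ex_derive_n (fun r => vz (f r)) n s /\ ex_derive_n (fun r => vt (f r)) n s.

(* Levi-Civita covariant derivative in H^3 along the curve gamma of a vector
   field X along gamma: tangential projection of the ambient derivative. *)
Definition covD (gamma X : R -> vec4) (s : R) : vec4 :=
  vadd (dv X s) (vscal (lor (dv X s) (gamma s)) (gamma s)).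

Definition Vfield (a p : vec4) : vec4 := vadd a (vscal (lor a p) p).

Definition tangentT (gamma : R -> vec4) : R -> vec4 := dv gamma.
Definition curvature (gamma : R -> vec4) (s : R) : R :=
  sqrt (lor (covD gamma (tangentT gamma) s) (covD gamma (tangentT gamma) s)).
Definition normalN (gamma : R -> vec4) (s : R) : vec4 :=
  vscal (/ curvature gamma s) (covD gamma (tangentT gamma) s).
Definition binormalB (gamma : R -> vec4) (s : R) : vec4 :=
  cross (gamma s) (tangentT gamma s) (normalN gamma s).
(* From nabla_T N = -kappa T + tau B, tau = <nabla_T N, B> (as <B,B>=1, <T,B>=0). *)
Definition torsion (gamma : R -> vec4) (s : R) : R :=
  lor (covD gamma (normalN gamma) s) (binormalB gamma s).

Definition in_Iv (lo hi : Rbar) (s : R) : Prop := Rbar_lt lo s /\ Rbar_lt s hi.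

Definition conformal_trajectory (q : R) (a : vec4) (gamma : R -> vec4)
  (lo hi : Rbar) : Prop :=
  forall s, in_Iv lo hi s ->
    covD gamma (tangentT gamma) s =
    vscal q (cross (gamma s) (Vfield a (gamma s)) (tangentT gamma s)).

(* The conformal equation [A = q V x T] (with [A = nabla_T T]) makes [A] orthogonal to [a],
   because [det(a + <a,p> p, T, a, p) = 0]; differentiating, so is [A'].  Zero torsion means
   that [T, A, A', gamma] are linearly dependent, and a Gram-determinant computation then
   forces [<T, a> = 0].  Differentiating once more, [0 = <A, a> = <gamma'', a> - <gamma, a>
   = - <gamma, a>].  Finally, in the orthonormal frame [gamma, T] orthogonal to [a], another
   Gram determinant shows [|V x T|^2 = <a, a>], which is positive because the curvature is. *)

From Stdlib Require Import Reals Lra.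
From Coquelicot Require Import Coquelicot.
Open Scope R_scope.

Ltac vec4_ring :=
  repeat match goal with v : vec4 |- _ => destruct v end;
  unfold lor, vadd, vscal, cross, Vfield, det4, det3, e1, e2, e3, e4; simpl; ring.

Lemma lor_sym u v : lor u v = lor v u.
Proof. vec4_ring. Qed.

Lemma lor_vaddl u v w : lor (vadd u v) w = lor u w + lor v w.
Proof. vec4_ring. Qed.

Lemma lor_vscall c u w : lor (vscal c u) w = c * lor u w.
Proof. vec4_ring. Qed.

Lemma lor_0r u : lor u (V4 0 0 0 0) = 0.
Proof. vec4_ring. Qed.

Lemma lor_cross p u v w : lor (cross p u v) w = det4 u v w p.
Proof. vec4_ring. Qed.

Lemma lor_cross_Vfield p a v : lor (cross p (Vfield a p) v) a = 0.
Proof. vec4_ring. Qed.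

Definition gram_det (u1 u2 u3 u4 v1 v2 v3 v4 : vec4) : R :=
  det4 (V4 (lor u1 v1) (lor u1 v2) (lor u1 v3) (lor u1 v4))
       (V4 (lor u2 v1) (lor u2 v2) (lor u2 v3) (lor u2 v4))
       (V4 (lor u3 v1) (lor u3 v2) (lor u3 v3) (lor u3 v4))
       (V4 (lor u4 v1) (lor u4 v2) (lor u4 v3) (lor u4 v4)).

(* The sign is the determinant of the Lorentz metric diag(1,1,1,-1). *)
Lemma det4_mul u1 u2 u3 u4 v1 v2 v3 v4 :
  det4 u1 u2 u3 u4 * det4 v1 v2 v3 v4 = - gram_det u1 u2 u3 u4 v1 v2 v3 v4.
Proof. unfold gram_det; vec4_ring. Qed.

(* Pairing [(v, w, w', p)] with [(v, w, a, p)], the Gram determinant collapses to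
   [<v, a> <w, w>^2] up to sign. *)
Lemma lor_eq0_of_det4_eq0 p v w w' a :
  lor p p = -1 -> lor v v = 1 -> lor p v = 0 ->
  lor w p = 0 -> lor w v = 0 -> lor w a = 0 -> lor w w > 0 ->
  lor w' p = 0 -> lor w' v = - lor w w -> lor w' a = 0 ->
  det4 v w w' p = 0 -> lor v a = 0.
Proof.
intros Hpp Hvv Hpv Hwp Hwv Hwa Hww Hw'p Hw'v Hw'a Hdet.
pose proof (det4_mul v w w' p v w a p) as G.
rewrite Hdet, Rmult_0_l in G; unfold gram_det, det4, det3 in G; simpl in G.
rewrite (lor_sym v w), (lor_sym v p), (lor_sym p w), (lor_sym p a) in G.
rewrite Hpp, Hvv, Hpv, Hwp, Hwv, Hwa, Hw'p, Hw'v, Hw'a in G.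
assert (Hk : lor v a * (lor w w * lor w w) = 0) by lra.
destruct (Rmult_integral _ _ Hk) as [|Hk']; [assumption | nra].
Qed.

(* Here [det(a, v, C, p) = <C, C>], and the Gram determinant of [(a, v, C, p)] is
   [- <a, a> <C, C>]. *)
Lemma lor_cross_Vfield_self p a v :
  lor p p = -1 -> lor v v = 1 -> lor p v = 0 -> lor a v = 0 -> lor a p = 0 ->
  let C := cross p (Vfield a p) v in lor C C * (lor C C - lor a a) = 0.
Proof.
intros Hpp Hvv Hpv Hav Hap C.
assert (HC : lor C C = det4 a v C p).
{ unfold C at 1; rewrite lor_cross; unfold C; vec4_ring. }
assert (HCw : forall w, lor C w = det4 (Vfield a p) v w p) by (intros; apply lor_cross).
assert (HCa : lor C a = 0) by (rewrite HCw; vec4_ring).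
assert (HCv : lor C v = 0) by (rewrite HCw; vec4_ring).
assert (HCp : lor C p = 0) by (rewrite HCw; vec4_ring).
pose proof (det4_mul a v C p a v C p) as G.
rewrite <- HC in G; unfold gram_det, det4, det3 in G; simpl in G.
rewrite (lor_sym v a), (lor_sym a C), (lor_sym v C), (lor_sym p a), (lor_sym p C) in G.
rewrite Hpp, Hvv, Hpv, Hav, Hap, HCa, HCv, HCp in G.
lra.
Qed.

Definition ex_derive_vec (u : R -> vec4) (s : R) : Prop :=
  ex_derive (fun r => vx (u r)) s /\ ex_derive (fun r => vy (u r)) s /\
  ex_derive (fun r => vz (u r)) s /\ ex_derive (fun r => vt (u r)) s.

Lemma is_derive_lor u v s : ex_derive_vec u s -> ex_derive_vec v s ->
  is_derive (fun r => lor (u r) (v r)) s (lor (dv u s) (v s) + lor (u s) (dv v s)).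
Proof.
intros (ux & uy & uz & ut) (vx' & vy' & vz' & vt').
apply Derive_correct in ux, uy, uz, ut, vx', vy', vz', vt'.
replace (_ + _) with
  ((Derive (fun r => vx (u r)) s * vx (v s) + vx (u s) * Derive (fun r => vx (v r)) s)
 + (Derive (fun r => vy (u r)) s * vy (v s) + vy (u s) * Derive (fun r => vy (v r)) s)
 + (Derive (fun r => vz (u r)) s * vz (v s) + vz (u s) * Derive (fun r => vz (v r)) s)
 - (Derive (fun r => vt (u r)) s * vt (v s) + vt (u s) * Derive (fun r => vt (v r)) s))
  by (unfold lor, dv; simpl; ring).
unfold lor.
apply (is_derive_minus (fun r => _ + _ + _) (fun r => vt (u r) * vt (v r)));
  [apply (is_derive_plus (fun r => _ + _) (fun r => vz (u r) * vz (v r)));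
   [apply (is_derive_plus (fun r => vx (u r) * vx (v r)) (fun r => vy (u r) * vy (v r)))|]|];
  apply Derive.is_derive_mult; assumption.
Qed.

Lemma ex_derive_vec_vadd u v s : ex_derive_vec u s -> ex_derive_vec v s ->
  ex_derive_vec (fun r => vadd (u r) (v r)) s.
Proof.
intros (? & ? & ? & ?) (? & ? & ? & ?); repeat split; simpl;
  match goal with |- ex_derive (fun r => @?f r + @?g r) _ => apply (ex_derive_plus f g) end; auto.
Qed.

Lemma ex_derive_vec_vscal c u s : ex_derive c s -> ex_derive_vec u s ->
  ex_derive_vec (fun r => vscal (c r) (u r)) s.
Proof.
intros ? (? & ? & ? & ?); repeat split; simpl;
  match goal with |- ex_derive (fun r => @?f r * @?g r) _ => apply (ex_derive_mult f g) end; auto.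
Qed.

Lemma dv_vscal c u s : ex_derive c s -> ex_derive_vec u s ->
  dv (fun r => vscal (c r) (u r)) s = vadd (vscal (Derive c s) (u s)) (vscal (c s) (dv u s)).
Proof.
intros ? (? & ? & ? & ?); unfold dv, vadd, vscal; simpl.
f_equal; rewrite Derive_mult; auto; ring.
Qed.

Lemma ex_derive_vec_const a s : ex_derive_vec (fun _ => a) s.
Proof. repeat split; apply ex_derive_const. Qed.

Lemma dv_const a s : dv (fun _ => a) s = V4 0 0 0 0.
Proof. unfold dv; simpl; rewrite !Derive_const; reflexivity. Qed.

Section Interval.

Variables lo hi : Rbar.

Lemma in_Iv_inhabited : Rbar_lt lo hi -> exists s, in_Iv lo hi s.
Proof.
destruct lo as [l| |], hi as [h| |]; simpl; intros H; try contradiction.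
- exists ((l + h) / 2); split; simpl; lra.
- exists (l + 1); split; simpl; auto; lra.
- exists (h - 1); split; simpl; auto; lra.
- exists 0; split; simpl; auto.
Qed.

Lemma is_derive_eq0_of_const (phi : R -> R) c s d :
  in_Iv lo hi s -> (forall r, in_Iv lo hi r -> phi r = c) -> is_derive phi s d -> d = 0.
Proof.
intros Hs Hc Hd.
assert (Hd' : is_derive (fun _ => c) s d).
{ apply (is_derive_ext_loc phi); [|exact Hd].
  apply (filter_imp (in_Iv lo hi)); [exact Hc|].
  exact (open_and _ _ (open_Rbar_gt lo) (open_Rbar_lt hi) s Hs). }
rewrite <- (is_derive_unique _ _ _ Hd'); apply Derive_const.
Qed.

Lemma lor_dv_eq0_of_const u v c s :
  in_Iv lo hi s -> ex_derive_vec u s -> ex_derive_vec v s ->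
  (forall r, in_Iv lo hi r -> lor (u r) (v r) = c) ->
  lor (dv u s) (v s) + lor (u s) (dv v s) = 0.
Proof.
intros Hs Hu Hv Hc; exact (is_derive_eq0_of_const _ c s _ Hs Hc (is_derive_lor u v s Hu Hv)).
Qed.

End Interval.

Section ArcLengthCurve.

Variables (lo hi : Rbar) (gamma : R -> vec4).
Hypothesis gamma_smooth : forall s, in_Iv lo hi s -> smooth_at gamma s.
Hypothesis gamma_in_H3 : forall s, in_Iv lo hi s -> inH3 (gamma s).
Hypothesis gamma_unit_speed :
  forall s, in_Iv lo hi s -> lor (tangentT gamma s) (tangentT gamma s) = 1.

Local Notation T := (tangentT gamma).
Local Notation A := (covD gamma (tangentT gamma)).

Lemma ex_derive_vec_gamma s : in_Iv lo hi s -> ex_derive_vec gamma s.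
Proof. intros Hs; destruct (gamma_smooth s Hs 1%nat) as (? & ? & ? & ?); repeat split; assumption. Qed.

Lemma ex_derive_vec_T s : in_Iv lo hi s -> ex_derive_vec T s.
Proof. intros Hs; destruct (gamma_smooth s Hs 2%nat) as (? & ? & ? & ?); repeat split; assumption. Qed.

Lemma ex_derive_vec_dT s : in_Iv lo hi s -> ex_derive_vec (dv T) s.
Proof. intros Hs; destruct (gamma_smooth s Hs 3%nat) as (? & ? & ? & ?); repeat split; assumption. Qed.

Lemma ex_derive_vec_A s : in_Iv lo hi s -> ex_derive_vec A s.
Proof.
intros Hs; apply ex_derive_vec_vadd; [exact (ex_derive_vec_dT s Hs)|].
apply ex_derive_vec_vscal; [|exact (ex_derive_vec_gamma s Hs)].
eexists; apply is_derive_lor; [exact (ex_derive_vec_dT s Hs)|exact (ex_derive_vec_gamma s Hs)].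
Qed.

Lemma lor_gamma_T s : in_Iv lo hi s -> lor (gamma s) (T s) = 0.
Proof.
intros Hs.
assert (H := lor_dv_eq0_of_const lo hi gamma gamma (-1) s Hs
  (ex_derive_vec_gamma s Hs) (ex_derive_vec_gamma s Hs) (fun r Hr => proj1 (gamma_in_H3 r Hr))).
rewrite (lor_sym (dv gamma s)) in H; unfold tangentT; lra.
Qed.

Lemma lor_T_dT s : in_Iv lo hi s -> lor (T s) (dv T s) = 0.
Proof.
intros Hs.
assert (H := lor_dv_eq0_of_const lo hi T T 1 s Hs
  (ex_derive_vec_T s Hs) (ex_derive_vec_T s Hs) gamma_unit_speed).
rewrite (lor_sym (dv T s)) in H; lra.
Qed.

Lemma lor_gamma_dT s : in_Iv lo hi s -> lor (gamma s) (dv T s) = -1.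
Proof.
intros Hs.
assert (H := lor_dv_eq0_of_const lo hi gamma T 0 s Hs
  (ex_derive_vec_gamma s Hs) (ex_derive_vec_T s Hs) lor_gamma_T).
change (dv gamma s) with (T s) in H; rewrite (gamma_unit_speed s Hs) in H; lra.
Qed.

Lemma covD_T_eq s : in_Iv lo hi s -> A s = vadd (dv T s) (vscal (-1) (gamma s)).
Proof. intros Hs; unfold covD at 1; rewrite lor_sym, lor_gamma_dT; auto. Qed.

Lemma lor_A_gamma s : in_Iv lo hi s -> lor (A s) (gamma s) = 0.
Proof.
intros Hs; rewrite covD_T_eq, lor_vaddl, lor_vscall, (lor_sym (dv T s)), lor_gamma_dT,
  (proj1 (gamma_in_H3 s Hs)); auto; lra.
Qed.

Lemma lor_A_T s : in_Iv lo hi s -> lor (A s) (T s) = 0.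
Proof.
intros Hs; rewrite covD_T_eq, lor_vaddl, lor_vscall, (lor_sym (dv T s)), lor_T_dT,
  lor_gamma_T; auto; lra.
Qed.

Lemma lor_dA_gamma s : in_Iv lo hi s -> lor (dv A s) (gamma s) = 0.
Proof.
intros Hs.
assert (H := lor_dv_eq0_of_const lo hi A gamma 0 s Hs
  (ex_derive_vec_A s Hs) (ex_derive_vec_gamma s Hs) lor_A_gamma).
change (dv gamma s) with (T s) in H; rewrite lor_A_T in H; auto; lra.
Qed.

Lemma lor_dA_T s : in_Iv lo hi s -> lor (dv A s) (T s) = - lor (A s) (A s).
Proof.
intros Hs.
assert (H := lor_dv_eq0_of_const lo hi A T 0 s Hs
  (ex_derive_vec_A s Hs) (ex_derive_vec_T s Hs) lor_A_T).
enough (lor (A s) (A s) = lor (A s) (dv T s)) by lra.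
rewrite (covD_T_eq s Hs) at 2.
rewrite (lor_sym (A s)), lor_vaddl, lor_vscall, (lor_sym (gamma s)), lor_A_gamma,
  (lor_sym (dv T s)); auto; lra.
Qed.

Lemma lor_A_A_gt0 s : curvature gamma s > 0 -> lor (A s) (A s) > 0.
Proof.
unfold curvature; intros Hk.
destruct (Rle_dec (lor (A s) (A s)) 0) as [Hle|]; [|lra].
rewrite (sqrt_neg_0 _ Hle) in Hk; lra.
Qed.

(* [N = A / kappa], and the derivative of [1/kappa] only contributes a multiple of [A]. *)
Lemma torsion_eq s : in_Iv lo hi s -> curvature gamma s > 0 ->
  torsion gamma s = / curvature gamma s * / curvature gamma s * det4 (T s) (A s) (dv A s) (gamma s).
Proof.
intros Hs Hk.
assert (Hdk : ex_derive (fun r => / curvature gamma r) s).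
{ eexists; apply is_derive_inv; [|lra].
  apply is_derive_sqrt; [|exact (lor_A_A_gt0 s Hk)].
  apply is_derive_lor; exact (ex_derive_vec_A s Hs). }
unfold torsion, covD at 1, binormalB.
change (normalN gamma) with (fun r => vscal (/ curvature gamma r) (A r)).
rewrite (dv_vscal _ _ _ Hdk (ex_derive_vec_A s Hs)).
generalize (Derive (fun r => / curvature gamma r) s) (/ curvature gamma s); intros c k.
vec4_ring.
Qed.

Variables (a : vec4) (q : R).
Hypothesis gamma_curved : forall s, in_Iv lo hi s -> curvature gamma s > 0.
Hypothesis gamma_conformal : conformal_trajectory q a gamma lo hi.
Hypothesis gamma_torsion_free : forall s, in_Iv lo hi s -> torsion gamma s = 0.

Lemma lor_A_a s : in_Iv lo hi s -> lor (A s) a = 0.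
Proof. intros Hs; rewrite gamma_conformal, lor_vscall, lor_cross_Vfield; auto; ring. Qed.

Lemma lor_dA_a s : in_Iv lo hi s -> lor (dv A s) a = 0.
Proof.
intros Hs.
assert (H := lor_dv_eq0_of_const lo hi A (fun _ => a) 0 s Hs
  (ex_derive_vec_A s Hs) (ex_derive_vec_const a s) lor_A_a).
rewrite dv_const, lor_0r in H; lra.
Qed.

Lemma det4_T_A_dA_gamma s : in_Iv lo hi s -> det4 (T s) (A s) (dv A s) (gamma s) = 0.
Proof.
intros Hs.
assert (Hk := gamma_curved s Hs).
assert (Hik : / curvature gamma s <> 0) by (apply Rinv_neq_0_compat; lra).
assert (H := torsion_eq s Hs Hk).
rewrite gamma_torsion_free in H; auto.
destruct (Rmult_integral _ _ (eq_sym H)) as [H'|]; [|assumption].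
destruct (Rmult_integral _ _ H'); contradiction.
Qed.

Lemma lor_T_a s : in_Iv lo hi s -> lor (T s) a = 0.
Proof.
intros Hs.
apply (lor_eq0_of_det4_eq0 (gamma s) (T s) (A s) (dv A s) a).
- exact (proj1 (gamma_in_H3 s Hs)).
- exact (gamma_unit_speed s Hs).
- exact (lor_gamma_T s Hs).
- exact (lor_A_gamma s Hs).
- exact (lor_A_T s Hs).
- exact (lor_A_a s Hs).
- exact (lor_A_A_gt0 s (gamma_curved s Hs)).
- exact (lor_dA_gamma s Hs).
- exact (lor_dA_T s Hs).
- exact (lor_dA_a s Hs).
- exact (det4_T_A_dA_gamma s Hs).
Qed.

Lemma lor_gamma_a s : in_Iv lo hi s -> lor (gamma s) a = 0.
Proof.
intros Hs.
assert (H := lor_dv_eq0_of_const lo hi T (fun _ => a) 0 s Hs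
  (ex_derive_vec_T s Hs) (ex_derive_vec_const a s) lor_T_a).
rewrite dv_const, lor_0r in H.
assert (HA := lor_A_a s Hs).
rewrite (covD_T_eq s Hs), lor_vaddl, lor_vscall in HA.
lra.
Qed.

Lemma lor_a_a_gt0 s : in_Iv lo hi s -> lor a a > 0.
Proof.
intros Hs.
assert (HA := lor_A_A_gt0 s (gamma_curved s Hs)).
rewrite gamma_conformal, !lor_vscall, (lor_sym _ (vscal _ _)), lor_vscall in HA; auto.
assert (HC := lor_cross_Vfield_self (gamma s) a (T s)
  (proj1 (gamma_in_H3 s Hs)) (gamma_unit_speed s Hs)
  (lor_gamma_T s Hs)
  (eq_trans (lor_sym _ _) (lor_T_a s Hs)) (eq_trans (lor_sym _ _) (lor_gamma_a s Hs))).
simpl in HC.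
set (C := cross (gamma s) (Vfield a (gamma s)) (T s)) in *.
assert (lor C C <> 0) by (intros H0; rewrite H0 in HA; lra).
destruct (Rmult_integral _ _ HC); [contradiction|nra].
Qed.

End ArcLengthCurve.

Theorem mainTheorem10 (a : vec4) (q : R) (gamma : R -> vec4) (lo hi : Rbar) :
  a <> V4 0 0 0 0 ->
  q <> 0 ->
  Rbar_lt lo hi ->
  (forall s, in_Iv lo hi s -> smooth_at gamma s) ->
  (forall s, in_Iv lo hi s -> inH3 (gamma s)) ->
  (forall s, in_Iv lo hi s -> lor (tangentT gamma s) (tangentT gamma s) = 1) ->
  (forall s, in_Iv lo hi s -> curvature gamma s > 0) ->
  conformal_trajectory q a gamma lo hi ->
  (forall s, in_Iv lo hi s -> torsion gamma s = 0) ->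
  (forall s, in_Iv lo hi s -> lor a (gamma s) = 0) /\ lor a a > 0.
Proof.
intros _ _ Hlohi Hsmooth HH3 Hunit Hcurved Hconf Htors.
split.
- intros s Hs; rewrite lor_sym.
  exact (lor_gamma_a lo hi gamma Hsmooth HH3 Hunit a q Hcurved Hconf Htors s Hs).
- destruct (in_Iv_inhabited lo hi Hlohi) as [s Hs].
  exact (lor_a_a_gt0 lo hi gamma Hsmooth HH3 Hunit a q Hcurved Hconf Htors s Hs).
Qed.
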